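(* Let $L\in\mathbb N$ and $0\le p<1$. On $\Omega=\{0,1\}^L$, with $\omega=(\omega(0),\dots,\omega(L-1))$ and $|\omega|=\sum_j\omega(j)$, let $Q$ be the transition function $$Q\big(\eta,(\eta(1),\dots,\eta(L-1),s)\big)=\begin{cases}\frac1L\big(|\eta|p+(L-|\eta|)(1-p)\big),& s=1,\\ \frac1L\big((L-|\eta|)p+|\eta|(1-p)\big),& s=0,\end{cases}$$ and $Q(\eta,\omega)=0$ for all other $\omega$. Let $c_j=(1-p)\big(1-\frac jL\big)+\frac jLp$ for $0\le j\le L$. Then $$\pi(\omega)=Z^{-1}\prod_{j=0}^{|\omega|-1}\frac{c_j}{c_{L-j-1}},$$ with $Z$ the normalizing constant (empty product $=1$), is a stationary distribution of $Q$, i.e. $\pi Q=\pi$. *)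

From HB Require Import structures.
From mathcomp Require Import all_boot all_order all_algebra.
Set Implicit Arguments. Unset Strict Implicit. Unset Printing Implicit Defensive.
Import Order.TTheory GRing.Theory Num.Theory.
Local Open Scope ring_scope.

(* Omega = {0,1}^L, a configuration is w : {ffun 'I_L -> bool},
   w i = true means w(i) = 1. *)
Definition config (L : nat) := {ffun 'I_L -> bool}.

Definition weight (L : nat) (w : config L) : nat := (\sum_(i < L) (w i : nat))%N.

Definition shift (L : nat) (eta : config L) (s : bool) : config L :=
  [ffun i : 'I_L => if (i.+1 < L)%N then eta (insubd i i.+1) else s].

Definition Qtrans (R : realFieldType) (L : nat) (p : R) (eta w : config L) : R :=
  let k := (weight eta)%:R in
  if w == shift eta true then (k * p + (L%:R - k) * (1 - p)) / L%:R
  else if w == shift eta false then ((L%:R - k) * p + k * (1 - p)) / L%:R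
  else 0.

Definition cc (R : realFieldType) (L : nat) (p : R) (j : nat) : R :=
  (1 - p) * (1 - j%:R / L%:R) + j%:R / L%:R * p.

Definition pi_un (R : realFieldType) (L : nat) (p : R) (w : config L) : R :=
  \prod_(j < weight w) (cc L p j / cc L p (L - j - 1)%N).

Definition Zconst (R : realFieldType) (L : nat) (p : R) : R :=
  \sum_(w : config L) pi_un p w.

Definition pi_stat (R : realFieldType) (L : nat) (p : R) (w : config L) : R :=
  pi_un p w / Zconst L p.

From HB Require Import structures.
From mathcomp Require Import all_boot all_order all_algebra.
From mathcomp Require Import zify ring lra.
Import Order.TTheory GRing.Theory Num.Theory.
Local Open Scope ring_scope.
Set Implicit Arguments. Unset Strict Implicit.

(* Every [w] has exactly two predecessors under [Q], namely [w] shifted back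
   with first bit 0 or 1; their weights are [k] and [k + 1], where [k] counts
   the ones among the first [L - 1] bits of [w].  Since [1 - c_j = c_(L-j)],
   stationarity at [w] reduces, whatever its last bit, to the balance
   relation [P(k+1) c_(L-k-1) = P(k) c_k] for the partial products
   [P(k) = prod_(j<k) c_j / c_(L-j-1)], which holds by construction. *)

Section Normalization.
Variables (R : realFieldType) (T : finType) (x0 : T).
Variables (f : T -> R) (Q : T -> T -> R).
Hypothesis f_gt0 : forall x, 0 < f x.
Hypothesis f_invariant : forall y, \sum_x f x * Q x y = f y.

Let Z := \sum_x f x.

Lemma normalizer_gt0 : 0 < Z.
Proof.
rewrite /Z (bigD1 x0) //=; apply: ltr_wpDr (f_gt0 x0).
by apply: sumr_ge0 => x _; exact: ltW.
Qed.

Lemma normalized_invariant :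
  (forall x, 0 <= f x / Z) /\ \sum_x f x / Z = 1 /\
  (forall y, \sum_x f x / Z * Q x y = f y / Z).
Proof.
have Z_gt0 := normalizer_gt0.
split; [|split].
- by move=> x; rewrite divr_ge0 // ltW.
- by rewrite -mulr_suml divff // gt_eqF.
- move=> y; rewrite -f_invariant mulr_suml.
  by apply: eq_bigr => x _; rewrite mulrAC.
Qed.

End Normalization.

Section Coefficients.
Variables (R : realFieldType) (p : R).
Hypotheses (p_ge0 : 0 <= p) (p_lt1 : p < 1).

Lemma cc_gt0 (L j : nat) : (j < L)%N -> 0 < cc L p j.
Proof.
move=> jL; rewrite /cc.
have a_lt1 : j%:R / L%:R < 1 :> R.
  by rewrite ltr_pdivrMr ?mul1r ?ltr_nat // ltr0n; lia.
have a_ge0 : 0 <= j%:R / L%:R :> R by rewrite divr_ge0.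
set a := j%:R / L%:R in a_lt1 a_ge0 *.
have : 0 < (1 - p) * (1 - a) by apply: mulr_gt0; rewrite subr_gt0.
have : 0 <= a * p by apply: mulr_ge0.
lra.
Qed.

Lemma cc_complement (L k : nat) : (0 < L)%N -> (k <= L)%N ->
  cc L p (L - k) = 1 - cc L p k.
Proof.
move=> L_gt0 kL; have L_neq0 : L%:R != 0 :> R by rewrite pnatr_eq0 -lt0n.
by rewrite /cc natrB //; field.
Qed.

Lemma cc_rate1 (L k : nat) : (0 < L)%N ->
  (k%:R * p + (L%:R - k%:R) * (1 - p)) / L%:R = cc L p k.
Proof.
move=> L_gt0; have L_neq0 : L%:R != 0 :> R by rewrite pnatr_eq0 -lt0n.
by rewrite /cc; field.
Qed.

Lemma cc_rate0 (L k : nat) : (0 < L)%N -> (k <= L)%N ->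
  ((L%:R - k%:R) * p + k%:R * (1 - p)) / L%:R = cc L p (L - k).
Proof.
move=> L_gt0 kL; have L_neq0 : L%:R != 0 :> R by rewrite pnatr_eq0 -lt0n.
by rewrite cc_complement // /cc; field.
Qed.

Definition cc_prod (L k : nat) : R :=
  \prod_(j < k) (cc L p j / cc L p (L - j - 1)%N).

Lemma cc_prod_gt0 (L k : nat) : (k <= L)%N -> 0 < cc_prod L k.
Proof.
move=> kL; apply: prodr_gt0 => j _.
by apply: divr_gt0; apply: cc_gt0; have := ltn_ord j; lia.
Qed.

Lemma cc_prod_balance (L k : nat) : (k < L)%N ->
  cc_prod L k.+1 * cc L p (L - k.+1) = cc_prod L k * cc L p k.
Proof.
move=> kL; have c_neq0 : cc L p (L - k.+1) != 0 by rewrite gt_eqF ?cc_gt0; lia.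
by rewrite /cc_prod big_ord_recr /= -subnDA addn1 -mulrA divfK.
Qed.

End Coefficients.

Section Shift.
Variable n : nat.
Implicit Types (eta w : config n.+1) (s x : bool).

Definition unshift w x : config n.+1 :=
  [ffun i => if unlift ord0 i is Some j then w (widen_ord (leqnSn n) j) else x].

Definition init_weight w : nat :=
  (\sum_(i < n) (w (widen_ord (leqnSn n) i) : nat))%N.

Lemma shift_last eta s : shift eta s ord_max = s.
Proof. by rewrite ffunE /= ltnn. Qed.

Lemma shift_unshift w x : shift (unshift w x) (w ord_max) = w.
Proof.
apply/ffunP => i; rewrite !ffunE; case: ifP => iSn.
  have i_lt_n : (i < n)%N by rewrite -ltnS.
  rewrite (_ : insubd i i.+1 = lift ord0 (Ordinal i_lt_n)); last first.
    by apply/val_inj; rewrite /= val_insubd iSn.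
  by rewrite liftK; congr (w _); exact/val_inj.
suff -> : i = ord_max by [].
by apply/val_inj => /=; have := ltn_ord i; move/negbT: iSn; lia.
Qed.

Lemma shift_inv eta s w : shift eta s = w -> eta = unshift w (eta ord0).
Proof.
move=> <-; apply/ffunP => i; rewrite !ffunE.
case: (unliftP ord0 i) => [j ->|->] //.
rewrite ffunE /= ltnS ltn_ord; congr (eta _); apply/val_inj.
by rewrite /= val_insubd /= ltnS ltn_ord.
Qed.

Lemma weight_init_last w : weight w = (init_weight w + w ord_max)%N.
Proof. by rewrite /weight big_ord_recr. Qed.

Lemma weight_unshift w x : weight (unshift w x) = (x + init_weight w)%N.
Proof.
rewrite /weight big_ord_recl ffunE unlift_none; congr (_ + _)%N.
by apply: eq_bigr => i _; rewrite ffunE liftK.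
Qed.

Lemma init_weight_le w : (init_weight w <= n)%N.
Proof.
rewrite -[X in (_ <= X)%N]card_ord -sum1_card.
by apply: leq_sum => i _; exact: leq_b1.
Qed.

Lemma weight_le w : (weight w <= n.+1)%N.
Proof.
by rewrite weight_init_last; have := init_weight_le w; case: (w ord_max) => /=; lia.
Qed.

End Shift.

Section Stationarity.
Variables (R : realFieldType) (p : R) (n : nat).
Hypotheses (p_ge0 : 0 <= p) (p_lt1 : p < 1).
Implicit Types (eta w : config n.+1).

Lemma Qtrans_shift eta s : Qtrans p eta (shift eta s) =
  if s then cc n.+1 p (weight eta) else cc n.+1 p (n.+1 - weight eta).
Proof.
rewrite /Qtrans; case: s; first by rewrite eqxx cc_rate1.
have -> : (shift eta false == shift eta true) = false.
  by apply/negbTE/eqP => /(congr1 (fun w : config _ => w ord_max)); rewrite !shift_last.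
by rewrite eqxx cc_rate0 ?weight_le.
Qed.

Lemma Qtrans_unshift w x : Qtrans p (unshift w x) w =
  if w ord_max then cc n.+1 p (x + init_weight w)
  else cc n.+1 p (n.+1 - (x + init_weight w)).
Proof. by rewrite -{2}(shift_unshift w x) Qtrans_shift weight_unshift. Qed.

Lemma sum_Qtrans_predecessors (f : config n.+1 -> R) w :
  \sum_eta f eta * Qtrans p eta w =
  f (unshift w false) * Qtrans p (unshift w false) w +
  f (unshift w true) * Qtrans p (unshift w true) w.
Proof.
have unshift_neq : unshift w true != unshift w false.
  by apply/eqP => /(congr1 (fun eta : config _ => eta ord0)); rewrite !ffunE unlift_none.
rewrite (bigD1 (unshift w false)) //= (bigD1 (unshift w true)) //=.
rewrite big1 ?addr0 // => eta /andP [eta_neq0 eta_neq1].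
have not_pred s : w = shift eta s -> False.
  move=> /esym/shift_inv eta_unshift; move: eta_neq0 eta_neq1; rewrite eta_unshift.
  by case: (eta ord0); rewrite eqxx.
rewrite /Qtrans; case: eqP => [/not_pred//|_]; case: eqP => [/not_pred//|_].
by rewrite mulr0.
Qed.

Lemma pi_un_invariant w :
  \sum_eta pi_un p eta * Qtrans p eta w = pi_un p w.
Proof.
rewrite sum_Qtrans_predecessors !Qtrans_unshift.
rewrite /pi_un -!/(cc_prod p n.+1 _) !weight_unshift weight_init_last add0n add1n.
have k_lt : (init_weight w < n.+1)%N by rewrite ltnS init_weight_le.
set k := init_weight w in k_lt *.
have balance := cc_prod_balance p_ge0 p_lt1 k_lt.
have c_sum j : (j <= n.+1)%N -> cc n.+1 p (n.+1 - j) + cc n.+1 p j = 1.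
  by move=> jL; rewrite cc_complement //; ring.
case: (w ord_max); rewrite /= ?addn0 ?addn1.
- by rewrite -balance -mulrDr c_sum ?mulr1.
- by rewrite balance -mulrDr c_sum ?mulr1 // ltnW.
Qed.

End Stationarity.

Theorem mainTheorem14 (R : realFieldType) (L : nat) (p : R)
  (hL : (0 < L)%N) (hp0 : 0 <= p) (hp1 : p < 1) :
  (forall w : config L, 0 <= pi_stat p w) /\
  \sum_(w : config L) pi_stat p w = 1 /\
  (forall w : config L, \sum_(eta : config L) pi_stat p eta * Qtrans p eta w = pi_stat p w).
Proof.
case: L hL => // n _.
apply: (normalized_invariant [ffun => false]).
- move=> w; apply: cc_prod_gt0 => //; exact: weight_le.
- exact: pi_un_invariant.
Qed.
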